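(* Let $\sigma^2>0$, $P_{\mathrm{tran}}>0$, $\theta_{\mathrm I}>0$, $\rho_{\mathrm{cont}}>0$, $\rho_{\mathrm{out}}\in(0,1)$, $N=\tau f_{\mathrm s}>0$ and $\gamma\ge0$, and let $$a_1=\frac{N(1+\gamma)^2}{2+4\gamma},\qquad b_1=\frac{\sigma^2(2+4\gamma)}{N(1+\gamma)}.$$ Assume $b_1P^{-1}(1-\rho_{\mathrm{out}},a_1)>\sigma^2$ and set $P^{*}=\dfrac{\theta_{\mathrm I}P_{\mathrm{tran}}}{b_1P^{-1}(1-\rho_{\mathrm{out}},a_1)-\sigma^2}$. Then the transmit power constraint $P^{*}\le\rho_{\mathrm{cont}}$ holds if and only if $$\rho_{\mathrm{out}}\le 1-P\!\left(a_1,\ \frac{1}{b_1}\Big(\frac{\theta_{\mathrm I}P_{\mathrm{tran}}}{\rho_{\mathrm{cont}}}+\sigma^2\Big)\right).$$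
   Context: $P(a,x)=\frac{1}{\Gamma(a)}\int_0^x t^{a-1}e^{-t}\,dt$ is the regularized lower incomplete Gamma function and $P^{-1}(y,a)$ is its inverse in the second argument ($P(a,P^{-1}(y,a))=y$ for $y\in(0,1)$). In the paper, $P^{*}$ is the power obtained from an outage constraint on the interference at the primary receiver when the received-power estimate is modeled as Gamma with shape $a_1$ and scale $b_1$; the set of $\gamma$ (for given $\tau$) satisfying the displayed inequality is called the operating regime, and equality defines its boundary $\gamma^*$. *)

From HB Require Import structures.
From mathcomp Require Import all_boot all_order all_algebra.
From mathcomp Require Import all_classical all_reals all_analysis.
Set Implicit Arguments. Unset Strict Implicit. Unset Printing Implicit Defensive.
Import Order.TTheory GRing.Theory Num.Theory.
Local Open Scope classical_set_scope.
Local Open Scope ring_scope.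

Definition gamma_integrand {R : realType} (a t : R) : R :=
  t `^ (a - 1) * expR (- t).

Definition Gammaf {R : realType} (a : R) : R :=
  Rintegral lebesgue_measure `]0, +oo[ (gamma_integrand a).

Definition regGammaP {R : realType} (a x : R) : R :=
  Rintegral lebesgue_measure `]0, x[ (gamma_integrand a) / Gammaf a.

Definition regGammaPinv {R : realType} (y a : R) : R :=
  xget 0 [set x | 0 < x /\ regGammaP a x = y].

From mathcomp Require Import all_boot all_order all_algebra.
From mathcomp Require Import all_classical all_reals all_analysis.
From mathcomp Require Import measurable_realfun lebesgue_measure lebesgue_integral.
Set Implicit Arguments.
Unset Strict Implicit.
Unset Printing Implicit Defensive.
Import Order.TTheory GRing.Theory Num.Theory.
Local Open Scope classical_set_scope.
Local Open Scope ring_scope.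

(* The integrand t^(a-1) e^(-t) is bounded away from 0 on every compact
   [x, y] of (0, +oo), so as soon as Gamma(a) > 0 the map P(a, .) is strictly
   increasing on (0, +oo).  The hypothesis b1 P^-1(1 - rho_out, a1) > sigma^2
   forces P^-1 to be a genuine solution of P(a1, x) = 1 - rho_out, and then
   P^* <= rho_cont, which rearranges to (theta_I P_tran/rho_cont + sigma^2)/b1
   <= P^-1(1 - rho_out, a1), is equivalent to the same inequality after
   applying P(a1, .). *)

Section GammaIntegrand.
Variable R : realType.
Implicit Types a t x y : R.

Lemma gamma_integrand_ge0 a t : 0 <= gamma_integrand a t.
Proof. by rewrite mulr_ge0 ?powR_ge0 ?expR_ge0. Qed.

Lemma measurable_gamma_integrand a (D : set R) :
  measurable_fun D (fun t => (gamma_integrand a t)%:E).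
Proof.
apply/measurable_funTS/measurable_EFinP; apply: measurable_funM; first exact: measurable_powR.
by apply: measurableT_comp; [exact: measurable_expR | exact: measurable_funN].
Qed.

Lemma gamma_integrand_itv_lbound a x y : 0 < x ->
  exists2 c, 0 < c & forall t, x <= t <= y -> c <= gamma_integrand a t.
Proof.
move=> x0; exists (expR (Num.min ((a - 1) * ln x) ((a - 1) * ln y)) * expR (- y)).
  by rewrite mulr_gt0 ?expR_gt0.
move=> t /andP[xt ty]; have t0 : 0 < t := lt_le_trans x0 xt.
rewrite /gamma_integrand /powR gt_eqF // ler_pM ?expR_ge0 ?ler_expR ?lerN2 //.
have lnxt : ln x <= ln t by rewrite ler_ln ?posrE.
have lnty : ln t <= ln y by rewrite ler_ln ?posrE ?(lt_le_trans t0 ty).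
rewrite ge_min; have [a1|a1] := lerP 0 (a - 1).
  by rewrite ler_wpM2l.
by rewrite (ler_wnM2l (ltW a1) lnty) orbT.
Qed.

End GammaIntegrand.

Section RegularizedGamma.
Variable R : realType.
Implicit Types (a x y : R) (D : set R).

Definition gamma_integral a D :=
  (\int[lebesgue_measure]_(t in D) (gamma_integrand a t)%:E)%E.

Lemma regGammaPE a x : regGammaP a x = fine (gamma_integral a `]0, x[) / Gammaf a.
Proof. by []. Qed.

Lemma gamma_integral_ge0 a D : (0 <= gamma_integral a D)%E.
Proof. by apply: integral_ge0 => t _; rewrite lee_fin gamma_integrand_ge0. Qed.

Lemma Gammaf_ge0 a : 0 <= Gammaf a.
Proof. exact/fine_ge0/gamma_integral_ge0. Qed.

Lemma gamma_integral_fin_num a D : 0 < Gammaf a -> measurable D ->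
  D `<=` `]0, +oo[ -> gamma_integral a D \is a fin_num.
Proof.
move=> Gamma_gt0 mD Dpos; rewrite ge0_fin_numE ?gamma_integral_ge0 //.
have Dle : (gamma_integral a D <= gamma_integral a `]0%R, +oo[)%E.
  apply: ge0_subset_integral => //; first exact: measurable_gamma_integrand.
  by move=> t _; rewrite lee_fin gamma_integrand_ge0.
apply: le_lt_trans Dle _; rewrite ltNge leye_eq; apply: contraTN Gamma_gt0 => /eqP.
by rewrite /Gammaf /Rintegral -/(gamma_integral a _) => ->; rewrite ltxx.
Qed.

Lemma gamma_integral_itv_gt0 a x y : 0 < x -> x < y ->
  (0 < gamma_integral a `[x, y[)%E.
Proof.
move=> x0 xy; have [c c0 c_le] := gamma_integrand_itv_lbound a y x0.
apply: (@lt_le_trans _ _ (c * (y - x))%:E); first by rewrite lte_fin mulr_gt0 ?subr_gt0.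
have -> : (c * (y - x))%:E = (\int[lebesgue_measure]_(t in `[x, y[) (cst c%:E) t)%E.
  have := lebesgue_measure_itv `[x, y[; rewrite /= lte_fin xy => itvE.
  by rewrite integral_cst // EFinM; congr (_ * _)%E; exact: esym itvE.
apply: ge0_le_integral => //.
- by move=> t _; rewrite lee_fin ltW.
- exact: measurable_gamma_integrand.
by move=> t; rewrite /= in_itv /= => /andP[xt ty]; rewrite lee_fin c_le // xt ltW.
Qed.

Lemma regGammaP_lt a x y : 0 < Gammaf a -> 0 < x -> x < y ->
  regGammaP a x < regGammaP a y.
Proof.
move=> Gamma_gt0 x0 xy.
have itv_split : `]0, y[%classic = `]0, x[%classic `|` `[x, y[%classic :> set R.
  by rewrite (@itv_bndbnd_setU _ _ (BRight 0) (BLeft x) (BLeft y)) //= bnd_simp ltW.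
have itv_disj : [disjoint `]0, x[%classic & `[x, y[%classic :> set R].
  rewrite disj_set2E; apply/eqP/seteqP; split => // t /=.
  by rewrite !in_itv /= => -[/andP[_ tx] /andP[xt _]]; move: (lt_le_trans tx xt); rewrite ltxx.
have lo_pos : `]0, x[ `<=` `]0%R, +oo[.
  by move=> t /=; rewrite !in_itv /= => /andP[-> _].
have hi_pos : `[x, y[ `<=` `]0%R, +oo[.
  by move=> t /=; rewrite !in_itv /= andbT => /andP[xt _]; exact: lt_le_trans xt.
have lo_fin := gamma_integral_fin_num Gamma_gt0 (measurable_itv _) lo_pos.
have hi_fin := gamma_integral_fin_num Gamma_gt0 (measurable_itv _) hi_pos.
have split_integral : gamma_integral a `]0, y[ =
    adde (gamma_integral a `]0, x[) (gamma_integral a `[x, y[).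
  rewrite /gamma_integral itv_split ge0_integral_setU //.
    exact: measurable_gamma_integrand.
  by move=> t _; rewrite lee_fin gamma_integrand_ge0.
have hi_gt0 : 0 < fine (gamma_integral a `[x, y[).
  by rewrite -lte_fin fineK // gamma_integral_itv_gt0.
rewrite !regGammaPE split_integral (fineD lo_fin hi_fin).
by rewrite ltr_pM2r ?invr_gt0 // ltrDl.
Qed.

Lemma ler_regGammaP a x y : 0 < Gammaf a -> 0 < x -> 0 < y ->
  (regGammaP a x <= regGammaP a y) = (x <= y).
Proof.
move=> Gamma_gt0 x0 y0; apply/idP/idP.
  by apply: contraTT; rewrite -!ltNge; exact: regGammaP_lt.
by rewrite le_eqVlt => /predU1P[-> //|xy]; exact/ltW/regGammaP_lt.
Qed.

Lemma Gammaf_gt0 a x : regGammaP a x != 0 -> 0 < Gammaf a.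
Proof.
rewrite lt_neqAle Gammaf_ge0 andbT; apply: contraNN => /eqP Gamma0.
by rewrite regGammaPE -Gamma0 invr0 mulr0.
Qed.

Lemma regGammaPinvP y a : regGammaPinv y a != 0 ->
  0 < regGammaPinv y a /\ regGammaP a (regGammaPinv y a) = y.
Proof.
have [sol _|no_sol] := pselect (exists x, 0 < x /\ regGammaP a x = y).
  exact: xgetPex sol.
by rewrite /regGammaPinv (xgetPN _ (fun x sol => no_sol (ex_intro _ x sol))) eqxx.
Qed.

End RegularizedGamma.

Lemma ler_pdiv_shift (R : realFieldType) (c r s b x : R) :
  0 < r -> 0 < b -> s < b * x ->
  (c / (b * x - s) <= r) = ((c / r + s) / b <= x).
Proof.
move=> r0 b0 sbx.
rewrite ler_pdivrMr ?subr_gt0 // ler_pdivrMr // -lerBrDr ler_pdivrMr //.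
by rewrite mulrC (mulrC x).
Qed.

Theorem mainTheorem2 (R : realType)
  (sigma2 P_tran theta_I rho_cont rho_out tau fs gamma : R) :
  0 < sigma2 -> 0 < P_tran -> 0 < theta_I -> 0 < rho_cont ->
  0 < rho_out < 1 -> 0 < tau * fs -> 0 <= gamma ->
  let N := tau * fs in
  let a1 := N * (1 + gamma) ^+ 2 / (2 + 4 * gamma) in
  let b1 := sigma2 * (2 + 4 * gamma) / (N * (1 + gamma)) in
  b1 * regGammaPinv (1 - rho_out) a1 > sigma2 ->
  let Pstar := theta_I * P_tran / (b1 * regGammaPinv (1 - rho_out) a1 - sigma2) in
  (Pstar <= rho_cont <->
   rho_out <= 1 - regGammaP a1 ((theta_I * P_tran / rho_cont + sigma2) / b1)).
Proof.
move=> sigma2_gt0 P_tran_gt0 theta_I_gt0 rho_cont_gt0 /andP[_ rho_out_lt1] _ _ N a1 b1.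
set x := regGammaPinv _ _ => sigma2_lt Pstar.
have x_neq0 : x != 0 by apply: contraTneq sigma2_lt => ->; rewrite mulr0 ltNge ltW.
have [x_gt0 Px] := regGammaPinvP x_neq0.
have Gamma_gt0 : 0 < Gammaf a1 by apply: (@Gammaf_gt0 _ _ x); rewrite Px subr_eq0 gt_eqF.
have b1_gt0 : 0 < b1 by rewrite -(pmulr_lgt0 _ x_gt0) (lt_trans sigma2_gt0).
have y_gt0 : 0 < (theta_I * P_tran / rho_cont + sigma2) / b1.
  by rewrite divr_gt0 // addr_gt0 // divr_gt0 // mulr_gt0.
rewrite /Pstar ler_pdiv_shift // -(ler_regGammaP Gamma_gt0 y_gt0 x_gt0) Px.
by rewrite !lerBrDr addrC.
Qed.
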